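(* Let $a\in\mathbb R^n$ with $a\geq 0$, $P\in\mathbb R^{n\times n}$ with $P\geq 0$, and $b:\mathbb R^n\times\mathbb R^n\to\mathbb R^n$ bilinear with $b(x,y)\geq0$ for all $x,y\geq 0$. Let $x_0\geq 0$ and $x_{k+1}=a+Px_k+b(x_k,x_k)$ for $k\geq 0$, and suppose the sequence $(x_k)$ is nondecreasing and converges to a limit $x_\ast$ with $x_\ast>x_0$ (strictly, in every component). Then $\rho\big(P+b(x_\ast,\cdot)+b(\cdot,x_\ast)\big)\leq 1$.
   Context: Inequalities between vectors/matrices are componentwise; $\rho$ denotes the spectral radius. For $x\in\mathbb R^n$, $b(x,\cdot)$ and $b(\cdot,x)$ denote the $n\times n$ matrices of the linear maps $y\mapsto b(x,y)$ and $y\mapsto b(y,x)$ respectively. The matrix $P+b(x,\cdot)+b(\cdot,x)$ is the Jacobian at $x$ of the map $x\mapsto a+Px+b(x,x)$. *)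

From Stdlib Require Import Reals Lra.
Open Scope R_scope.

(* Vectors of R^n are functions nat -> R (only indices i < n matter);
   n x n matrices are functions nat -> nat -> R. *)

Fixpoint sumR (n : nat) (f : nat -> R) : R :=
  match n with
  | O => 0
  | S m => sumR m f + f m
  end.

Definition mvmul (n : nat) (M : nat -> nat -> R) (v : nat -> R) : nat -> R :=
  fun i => sumR n (fun j => M i j * v j).

(* A bilinear map b : R^n x R^n -> R^n, given by its coefficient tensor B:
   b(x,y)_i = sum_{j,k<n} B i j k * x_j * y_k. Every bilinear map has this form. *)
Definition bil (n : nat) (B : nat -> nat -> nat -> R) (x y : nat -> R) : nat -> R :=
  fun i => sumR n (fun j => sumR n (fun k => B i j k * x j * y k)).

(* matrix of y |-> b(x,y) *)
Definition bil_left_mx (n : nat) (B : nat -> nat -> nat -> R) (x : nat -> R)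
  : nat -> nat -> R :=
  fun i k => sumR n (fun j => B i j k * x j).

(* matrix of y |-> b(y,x) *)
Definition bil_right_mx (n : nat) (B : nat -> nat -> nat -> R) (x : nat -> R)
  : nat -> nat -> R :=
  fun i j => sumR n (fun k => B i j k * x k).

Definition vle (n : nat) (x y : nat -> R) : Prop := forall i, (i < n)%nat -> x i <= y i.
Definition vlt (n : nat) (x y : nat -> R) : Prop := forall i, (i < n)%nat -> x i < y i.

(* (re + i*im) is a (complex) eigenvalue of the real n x n matrix M:
   there is a nonzero complex vector u + i w with M (u + i w) = (re + i im)(u + i w). *)
Definition is_eigenvalue (n : nat) (M : nat -> nat -> R) (re im : R) : Prop :=
  exists u w : nat -> R,
    (exists i, (i < n)%nat /\ (u i <> 0 \/ w i <> 0)) /\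
    (forall i, (i < n)%nat -> mvmul n M u i = re * u i - im * w i) /\
    (forall i, (i < n)%nat -> mvmul n M w i = im * u i + re * w i).

(* rho(M) <= r : every complex eigenvalue has modulus <= r
   (rho is the maximum modulus of the finitely many eigenvalues). *)
Definition spectral_radius_le (n : nat) (M : nat -> nat -> R) (r : R) : Prop :=
  forall re im, is_eigenvalue n M re im -> sqrt (re * re + im * im) <= r.

(* Let [J] be the Jacobian at [x∗] and suppose [J] has an eigenvalue of modulus
   [r > 1], with eigenvector [u + i w].  The modulus vector [z = |u + i w|] is
   nonnegative, nonzero and satisfies [J z >= r z].  Expanding the quadratic map
   [F y = a + P y + b(y,y)] around its fixed point [x∗],
   [F (x∗ - t z) = x∗ - t J z + t^2 b(z,z)], which is [<= x∗ - t z] for small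
   [t > 0]: coordinates with [z_i > 0] gain [(r - 1) z_i > 0], and a coordinate
   with [z_i = (J z)_i = 0] has [b(z,x∗)_i = 0], hence (as [x∗ > 0]) [b(z,z)_i = 0].
   Since [F] is monotone on nonnegative vectors and [x_0 < x∗], the whole
   sequence then stays below [x∗ - t z], so its limit [x∗] does too: absurd. *)

From Stdlib Require Import Reals Lra Lia Psatz.
Open Scope R_scope.

Lemma sumR_ext n f g : (forall i, (i < n)%nat -> f i = g i) -> sumR n f = sumR n g.
Proof.
  induction n as [|n IH]; simpl; intros H; auto.
  rewrite IH by (intros; apply H; lia). rewrite H by lia. reflexivity.
Qed.

Lemma sumR_const0 n : sumR n (fun _ => 0) = 0.
Proof. induction n as [|n IH]; simpl; auto. rewrite IH; lra. Qed.

Lemma sumR_plus n f g : sumR n (fun i => f i + g i) = sumR n f + sumR n g.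
Proof. induction n as [|n IH]; simpl; [lra|]. rewrite IH; lra. Qed.

Lemma sumR_scal_l n c f : sumR n (fun i => c * f i) = c * sumR n f.
Proof. induction n as [|n IH]; simpl; [lra|]. rewrite IH; lra. Qed.

Lemma sumR_scal_r n c f : sumR n (fun i => f i * c) = sumR n f * c.
Proof. induction n as [|n IH]; simpl; [lra|]. rewrite IH; lra. Qed.

Lemma sumR_lincomb3 n f g h c d :
  sumR n (fun i => f i + c * g i + d * h i) = sumR n f + c * sumR n g + d * sumR n h.
Proof. rewrite !sumR_plus, !sumR_scal_l. reflexivity. Qed.

Lemma sumR_le n f g : (forall i, (i < n)%nat -> f i <= g i) -> sumR n f <= sumR n g.
Proof.
  induction n as [|n IH]; simpl; intros H; [lra|].
  assert (sumR n f <= sumR n g) by (apply IH; intros; apply H; lia).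
  assert (f n <= g n) by (apply H; lia). lra.
Qed.

Lemma sumR_nonneg n f : (forall i, (i < n)%nat -> 0 <= f i) -> 0 <= sumR n f.
Proof. intros H. rewrite <- (sumR_const0 n). apply sumR_le; auto. Qed.

Lemma sumR_eq0_nonneg n f : (forall i, (i < n)%nat -> 0 <= f i) -> sumR n f = 0 ->
  forall i, (i < n)%nat -> f i = 0.
Proof.
  induction n as [|n IH]; simpl; intros H Hs i Hi; [lia|].
  assert (0 <= sumR n f) by (apply sumR_nonneg; intros; apply H; lia).
  assert (0 <= f n) by (apply H; lia).
  destruct (Nat.eq_dec i n) as [->|]; [lra|].
  apply IH; [intros; apply H; lia | lra | lia].
Qed.

Lemma sumR_swap n m (F : nat -> nat -> R) :
  sumR n (fun i => sumR m (fun j => F i j)) = sumR m (fun j => sumR n (fun i => F i j)).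
Proof.
  induction n as [|n IH]; simpl.
  - symmetry. apply sumR_const0.
  - rewrite IH, <- sumR_plus. reflexivity.
Qed.

Lemma sumR_delta n j (c : nat -> R) : (j < n)%nat ->
  sumR n (fun m => if Nat.eqb m j then c m else 0) = c j.
Proof.
  induction n as [|n IH]; simpl; intros Hj; [lia|].
  destruct (Nat.eq_dec j n) as [->|].
  - rewrite Nat.eqb_refl, (sumR_ext n _ (fun _ => 0)), sumR_const0; [lra|].
    intros i Hi. destruct (Nat.eqb_spec i n); [lia|reflexivity].
  - rewrite IH by lia. destruct (Nat.eqb_spec n j); [lia|lra].
Qed.

Lemma Un_cv_const (c : R) : Un_cv (fun _ => c) c.
Proof. intros e He. exists O. intros. unfold Rdist. rewrite Rminus_diag, Rabs_R0. lra. Qed.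

Lemma Un_cv_sumR n (f : nat -> nat -> R) (l : nat -> R) :
  (forall j, (j < n)%nat -> Un_cv (fun k => f k j) (l j)) ->
  Un_cv (fun k => sumR n (f k)) (sumR n l).
Proof.
  induction n as [|n IH]; simpl; intros H.
  - apply Un_cv_const.
  - apply CV_plus; [apply IH; intros; apply H|apply H]; lia.
Qed.

Lemma Un_cv_succ (u : nat -> R) l : Un_cv u l -> Un_cv (fun k => u (S k)) l.
Proof. intros H e He. destruct (H e He) as [N HN]. exists N. intros k Hk. apply HN. lia. Qed.

Lemma sqrt_sum_sqr_triangle a b c d :
  sqrt ((a + c) * (a + c) + (b + d) * (b + d)) <= sqrt (a * a + b * b) + sqrt (c * c + d * d).
Proof.
  assert (H1 : 0 <= a * a + b * b) by nra. assert (H2 : 0 <= c * c + d * d) by nra.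
  assert (Hs1 := sqrt_pos (a * a + b * b)). assert (Hs2 := sqrt_pos (c * c + d * d)).
  assert (Hcs : a * c + b * d <= sqrt (a * a + b * b) * sqrt (c * c + d * d)).
  { rewrite <- sqrt_mult by auto.
    destruct (Rle_dec (a * c + b * d) 0) as [Hle|Hgt].
    - assert (Hq := sqrt_pos ((a * a + b * b) * (c * c + d * d))). lra.
    - rewrite <- (sqrt_square (a * c + b * d)) by lra. apply sqrt_le_1_alt.
      assert (0 <= (a * d - b * c) * (a * d - b * c)) by apply Rle_0_sqr. nra. }
  rewrite <- (sqrt_square (sqrt (a * a + b * b) + sqrt (c * c + d * d))) by lra.
  apply sqrt_le_1_alt.
  assert (E1 := sqrt_sqrt _ H1). assert (E2 := sqrt_sqrt _ H2). nra.
Qed.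

Lemma sqrt_sumR_sqr_le n f g :
  sqrt (sumR n f * sumR n f + sumR n g * sumR n g) <=
  sumR n (fun j => sqrt (f j * f j + g j * g j)).
Proof.
  induction n as [|n IH]; simpl.
  - rewrite Rmult_0_l, Rplus_0_l, sqrt_0. lra.
  - eapply Rle_trans; [apply sqrt_sum_sqr_triangle|]. lra.
Qed.

Definition modulus (u w : nat -> R) : nat -> R := fun j => sqrt (u j * u j + w j * w j).

Lemma modulus_eigenvector_le n (M : nat -> nat -> R) re im u w :
  (forall i j, (i < n)%nat -> (j < n)%nat -> 0 <= M i j) ->
  (forall i, (i < n)%nat -> mvmul n M u i = re * u i - im * w i) ->
  (forall i, (i < n)%nat -> mvmul n M w i = im * u i + re * w i) ->
  forall i, (i < n)%nat ->
  sqrt (re * re + im * im) * modulus u w i <= mvmul n M (modulus u w) i.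
Proof.
  intros HM Hu Hw i Hi. unfold modulus.
  rewrite <- sqrt_mult by nra.
  replace ((re * re + im * im) * (u i * u i + w i * w i)) with
    (mvmul n M u i * mvmul n M u i + mvmul n M w i * mvmul n M w i)
    by (rewrite Hu, Hw by auto; ring).
  eapply Rle_trans; [apply sqrt_sumR_sqr_le|].
  apply Req_le, sumR_ext. intros j Hj.
  replace (M i j * u j * (M i j * u j) + M i j * w j * (M i j * w j))
    with (M i j * M i j * (u j * u j + w j * w j)) by ring.
  rewrite sqrt_mult, sqrt_square by (auto; nra). reflexivity.
Qed.

Lemma modulus_nonzero u w i : u i <> 0 \/ w i <> 0 -> 0 < modulus u w i.
Proof.
  intros H. apply sqrt_lt_R0.
  destruct H as [H|H]; [assert (0 < u i * u i) | assert (0 < w i * w i)];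
    try (apply Rsqr_pos_lt; auto); nra.
Qed.

Lemma uniform_small_param n (Q : nat -> R -> Prop) :
  (forall i, (i < n)%nat -> exists ti, 0 < ti /\ forall t, 0 < t <= ti -> Q i t) ->
  exists t0, 0 < t0 /\ forall t, 0 < t <= t0 -> forall i, (i < n)%nat -> Q i t.
Proof.
  induction n as [|n IH]; intros H.
  - exists 1. split; [lra|]. intros; lia.
  - destruct IH as [t1 [Ht1 H1]]; [intros; apply H; lia|].
    destruct (H n ltac:(lia)) as [t2 [Ht2 H2]].
    exists (Rmin t1 t2). split; [apply Rmin_glb_lt; auto|].
    intros t Ht i Hi. assert (Rmin t1 t2 <= t1) by apply Rmin_l.
    assert (Rmin t1 t2 <= t2) by apply Rmin_r.
    destruct (Nat.eq_dec i n) as [->|]; [apply H2; lra | apply H1; [lra|lia]].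
Qed.

Definition quad_map n a P B (y : nat -> R) : nat -> R :=
  fun i => a i + mvmul n P y i + bil n B y y i.

Definition jacobian n P B (y : nat -> R) : nat -> nat -> R :=
  fun i j => P i j + bil_left_mx n B y i j + bil_right_mx n B y i j.

Lemma mvmul_jacobian n P B y z i :
  mvmul n (jacobian n P B y) z i = mvmul n P z i + bil n B y z i + bil n B z y i.
Proof.
  unfold mvmul, jacobian, bil, bil_left_mx, bil_right_mx.
  rewrite (sumR_swap n n (fun j k => B i j k * y j * z k)), <- !sumR_plus.
  apply sumR_ext. intros j _. rewrite !Rmult_plus_distr_r, <- !sumR_scal_r.
  apply Rplus_eq_compat_l, sumR_ext. intros; ring.
Qed.

Lemma quad_map_shift n a P B y z t i :
  quad_map n a P B (fun j => y j - t * z j) i =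
  quad_map n a P B y i - t * mvmul n (jacobian n P B y) z i + t * t * bil n B z z i.
Proof.
  rewrite mvmul_jacobian. unfold quad_map.
  assert (Hmv : mvmul n P (fun j => y j - t * z j) i =
      mvmul n P y i + (- t) * mvmul n P z i + 0 * mvmul n P z i).
  { unfold mvmul. rewrite <- sumR_lincomb3. apply sumR_ext. intros; ring. }
  assert (Hbil : bil n B (fun j => y j - t * z j) (fun j => y j - t * z j) i =
      bil n B y y i + (- t) * (bil n B y z i + bil n B z y i) + (t * t) * bil n B z z i).
  { unfold bil. rewrite <- sumR_plus, <- sumR_lincomb3. apply sumR_ext. intros j _.
    rewrite <- sumR_plus, <- sumR_lincomb3. apply sumR_ext. intros; ring. }
  rewrite Hmv, Hbil. ring.
Qed.

Section NonnegativeCoefficients.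

Variables (n : nat) (a : nat -> R) (P : nat -> nat -> R) (B : nat -> nat -> nat -> R).
Hypothesis ha : forall i, (i < n)%nat -> 0 <= a i.
Hypothesis hP : forall i j, (i < n)%nat -> (j < n)%nat -> 0 <= P i j.
Hypothesis hb : forall y z, vle n (fun _ => 0) y -> vle n (fun _ => 0) z ->
  vle n (fun _ => 0) (bil n B y z).

Lemma bil_coef_nonneg i j k : (i < n)%nat -> (j < n)%nat -> (k < n)%nat -> 0 <= B i j k.
Proof.
  intros Hi Hj Hk.
  set (e := fun j m => if Nat.eqb m j then 1 else 0).
  assert (He : forall j, vle n (fun _ => 0) (e j)).
  { intros j' m _. unfold e. destruct (Nat.eqb m j'); lra. }
  specialize (hb (e j) (e k) (He j) (He k) i Hi). unfold bil in hb.
  rewrite (sumR_ext n _ (fun j' => if Nat.eqb j' j then B i j' k else 0)) in hb.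
  - rewrite sumR_delta in hb; auto.
  - intros j' Hj'.
    rewrite (sumR_ext n _ (fun k' => if Nat.eqb k' k then B i j' k' * e j j' else 0)).
    + rewrite sumR_delta by auto. unfold e. destruct (Nat.eqb j' j); lra.
    + intros k' _. unfold e at 2. destruct (Nat.eqb k' k); lra.
Qed.

Lemma mvmul_nonneg y i : (i < n)%nat -> vle n (fun _ => 0) y -> 0 <= mvmul n P y i.
Proof. intros Hi Hy. apply sumR_nonneg. intros j Hj. apply Rmult_le_pos; auto. Qed.

Lemma mvmul_le y v i : (i < n)%nat -> vle n y v -> mvmul n P y i <= mvmul n P v i.
Proof. intros Hi Hyv. apply sumR_le. intros j Hj. apply Rmult_le_compat_l; auto. Qed.

Lemma bil_le y y' v v' i : (i < n)%nat ->
  vle n (fun _ => 0) y -> vle n (fun _ => 0) v -> vle n y y' -> vle n v v' ->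
  bil n B y v i <= bil n B y' v' i.
Proof.
  intros Hi Hy Hv Hyy Hvv. apply sumR_le. intros j Hj. apply sumR_le. intros k Hk.
  assert (0 <= y j) by (apply Hy; auto). assert (0 <= v k) by (apply Hv; auto).
  apply Rmult_le_compat; [| |apply Rmult_le_compat_l|]; try apply Rmult_le_pos;
    auto using bil_coef_nonneg.
Qed.

Lemma quad_map_nonneg y : vle n (fun _ => 0) y -> vle n (fun _ => 0) (quad_map n a P B y).
Proof.
  intros Hy i Hi. unfold quad_map.
  assert (0 <= mvmul n P y i) by (apply mvmul_nonneg; auto).
  assert (0 <= bil n B y y i) by (apply hb; auto). specialize (ha i Hi). lra.
Qed.

Lemma quad_map_le y v : vle n (fun _ => 0) y -> vle n y v ->
  vle n (quad_map n a P B y) (quad_map n a P B v).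
Proof.
  intros Hy Hyv i Hi. unfold quad_map.
  assert (Hv : vle n (fun _ => 0) v) by (intros j Hj; specialize (Hy j Hj); specialize (Hyv j Hj); lra).
  assert (mvmul n P y i <= mvmul n P v i) by (apply mvmul_le; auto).
  assert (bil n B y y i <= bil n B v v i) by (apply bil_le; auto). lra.
Qed.

Lemma jacobian_nonneg y : vle n (fun _ => 0) y ->
  forall i j, (i < n)%nat -> (j < n)%nat -> 0 <= jacobian n P B y i j.
Proof.
  intros Hy i j Hi Hj. unfold jacobian, bil_left_mx, bil_right_mx.
  assert (0 <= P i j) by auto.
  assert (0 <= sumR n (fun l => B i l j * y l))
    by (apply sumR_nonneg; intros; apply Rmult_le_pos; auto using bil_coef_nonneg).
  assert (0 <= sumR n (fun k => B i j k * y k))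
    by (apply sumR_nonneg; intros; apply Rmult_le_pos; auto using bil_coef_nonneg).
  lra.
Qed.

Lemma iterates_le_supersolution (x : nat -> nat -> R) (y : nat -> R) :
  vle n (fun _ => 0) (x O) ->
  (forall k i, (i < n)%nat -> x (S k) i = quad_map n a P B (x k) i) ->
  vle n (x O) y -> vle n (quad_map n a P B y) y ->
  forall k, vle n (x k) y.
Proof.
  intros Hx0 Hrec Hx0y Hy k.
  enough (Hk : vle n (fun _ => 0) (x k) /\ vle n (x k) y) by apply Hk.
  induction k as [|k [IHnn IHle]]; [split; auto|].
  split; intros i Hi.
  - pose proof (quad_map_nonneg (x k) IHnn i Hi). specialize (Hrec k i Hi). simpl in *. lra.
  - pose proof (quad_map_le (x k) y IHnn IHle i Hi).
    specialize (Hrec k i Hi). specialize (Hy i Hi). lra.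
Qed.

(* The coordinate dichotomy that makes [x∗ - t z] a supersolution for small [t]:
   where [(J z)_i = z_i = 0], nonnegativity forces [B i j k z_j = 0], since [x∗ > 0]. *)
Lemma jacobian_gap_or_bil_eq0 xs z r i : (i < n)%nat ->
  vlt n (fun _ => 0) xs -> vle n (fun _ => 0) z -> 1 < r ->
  r * z i <= mvmul n (jacobian n P B xs) z i ->
  0 < mvmul n (jacobian n P B xs) z i - z i \/ bil n B z z i = 0.
Proof.
  intros Hi Hxs Hz Hr Hrz.
  assert (Hxs' : vle n (fun _ => 0) xs) by (intros j Hj; apply Rlt_le, Hxs; auto).
  assert (0 <= z i) by auto.
  destruct (Rlt_dec 0 (mvmul n (jacobian n P B xs) z i - z i)) as [|Hgap]; [left; auto|right].
  assert (Hzi : z i = 0) by nra.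
  rewrite Hzi, mvmul_jacobian in Hgap.
  assert (0 <= mvmul n P z i) by (apply mvmul_nonneg; auto).
  assert (0 <= bil n B xs z i) by (apply hb; auto).
  assert (0 <= bil n B z xs i) by (apply hb; auto).
  assert (Hzxs : bil n B z xs i = 0) by lra.
  assert (Hcoef : forall j k, (j < n)%nat -> (k < n)%nat -> B i j k * z j = 0).
  { intros j k Hj Hk.
    assert (Hnn : forall j k, (j < n)%nat -> (k < n)%nat -> 0 <= B i j k * z j * xs k)
      by (intros; repeat apply Rmult_le_pos; auto using bil_coef_nonneg).
    assert (Hrow := sumR_eq0_nonneg n _
      (fun j Hj => sumR_nonneg n _ (fun k Hk => Hnn j k Hj Hk)) Hzxs j Hj).
    assert (Hjk := sumR_eq0_nonneg n _ (fun k Hk => Hnn j k Hj Hk) Hrow k Hk).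
    specialize (Hxs k Hk). apply Rmult_integral in Hjk as [|]; [auto|lra]. }
  unfold bil. rewrite <- (sumR_const0 n). apply sumR_ext. intros j Hj.
  rewrite <- (sumR_const0 n). apply sumR_ext. intros k Hk.
  rewrite (Hcoef j k Hj Hk). ring.
Qed.

Lemma supersolution_near_fixed_point x0 xs z r :
  vle n (fun _ => 0) x0 -> vlt n x0 xs ->
  (forall i, (i < n)%nat -> quad_map n a P B xs i = xs i) ->
  vle n (fun _ => 0) z -> 1 < r ->
  (forall i, (i < n)%nat -> r * z i <= mvmul n (jacobian n P B xs) z i) ->
  exists t, 0 < t /\ vle n x0 (fun j => xs j - t * z j) /\
    vle n (quad_map n a P B (fun j => xs j - t * z j)) (fun j => xs j - t * z j).
Proof.
  intros Hx0 Hlt Hfix Hz Hr Hrz.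
  assert (Hxs : vlt n (fun _ => 0) xs)
    by (intros i Hi; specialize (Hx0 i Hi); specialize (Hlt i Hi); simpl in *; lra).
  set (Jz := mvmul n (jacobian n P B xs) z).
  destruct (uniform_small_param n (fun i t => t * z i <= xs i - x0 i /\
      t * bil n B z z i <= Jz i - z i)) as [t [Ht Hsmall]].
  - intros i Hi. specialize (Hlt i Hi). assert (Hzi : 0 <= z i) by (apply Hz; auto).
    specialize (Hrz i Hi). fold Jz in Hrz.
    assert (Hbzz : 0 <= bil n B z z i) by (apply hb; auto).
    set (t1 := (xs i - x0 i) / (z i + 1)).
    assert (Ht1 : 0 < t1) by (apply Rdiv_lt_0_compat; lra).
    assert (Ht1' : t1 * (z i + 1) = xs i - x0 i) by (unfold t1; field; lra).
    destruct (jacobian_gap_or_bil_eq0 xs z r i Hi Hxs Hz Hr Hrz) as [Hgap|Hb0].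
    + fold Jz in Hgap. set (t2 := (Jz i - z i) / (bil n B z z i + 1)).
      assert (Ht2 : 0 < t2) by (apply Rdiv_lt_0_compat; lra).
      assert (Ht2' : t2 * (bil n B z z i + 1) = Jz i - z i) by (unfold t2; field; lra).
      exists (Rmin t1 t2). split; [apply Rmin_glb_lt; auto|].
      intros s [Hs Hst]. assert (Rmin t1 t2 <= t1) by apply Rmin_l.
      assert (Rmin t1 t2 <= t2) by apply Rmin_r. split; nra.
    + exists t1. split; auto. intros s [Hs Hst]. rewrite Hb0. split; nra.
  - exists t. split; [auto|split]; intros i Hi; destruct (Hsmall t ltac:(lra) i Hi).
    + lra.
    + rewrite quad_map_shift, Hfix by auto. fold Jz. nra.
Qed.

End NonnegativeCoefficients.

Lemma limit_quad_map_fixed n a P B (x : nat -> nat -> R) xs :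
  (forall k i, (i < n)%nat -> x (S k) i = quad_map n a P B (x k) i) ->
  (forall i, (i < n)%nat -> Un_cv (fun k => x k i) (xs i)) ->
  forall i, (i < n)%nat -> quad_map n a P B xs i = xs i.
Proof.
  intros Hrec Hlim i Hi. apply (UL_sequence (fun k => x (S k) i)).
  - apply (Un_cv_ext (fun k => quad_map n a P B (x k) i)); [intros; rewrite Hrec; auto|].
    unfold quad_map, mvmul, bil.
    repeat apply CV_plus; try apply Un_cv_const; apply Un_cv_sumR; intros j Hj;
      [|apply Un_cv_sumR; intros k Hk; apply CV_mult; [apply CV_mult|]];
      try apply CV_mult; auto using Un_cv_const.
  - apply (Un_cv_succ (fun k => x k i)). auto.
Qed.

Theorem mainTheorem6 (n : nat) (a : nat -> R) (P : nat -> nat -> R)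
  (B : nat -> nat -> nat -> R) (x : nat -> nat -> R) (xstar : nat -> R)
  (ha : forall i, (i < n)%nat -> 0 <= a i)
  (hP : forall i j, (i < n)%nat -> (j < n)%nat -> 0 <= P i j)
  (hb : forall y z, vle n (fun _ => 0) y -> vle n (fun _ => 0) z ->
          vle n (fun _ => 0) (bil n B y z))
  (hx0 : vle n (fun _ => 0) (x O))
  (hrec : forall k i, (i < n)%nat ->
          x (S k) i = a i + mvmul n P (x k) i + bil n B (x k) (x k) i)
  (hmono : forall k, vle n (x k) (x (S k)))
  (hlim : forall i, (i < n)%nat -> Un_cv (fun k => x k i) (xstar i))
  (hpos : vlt n (x O) xstar) :
  spectral_radius_le n
    (fun i j => P i j + bil_left_mx n B xstar i j + bil_right_mx n B xstar i j) 1.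
Proof.
  change (spectral_radius_le n (jacobian n P B xstar) 1).
  intros re im [u [w [[i0 [Hi0 Hnz]] [Hu Hw]]]].
  destruct (Rle_dec (sqrt (re * re + im * im)) 1) as [|Hgt]; [auto|exfalso].
  apply Rnot_le_lt in Hgt.
  set (z := modulus u w).
  assert (Hz : vle n (fun _ => 0) z) by (intros j _; apply sqrt_pos).
  assert (Hxs : vle n (fun _ => 0) xstar)
    by (intros i Hi; specialize (hx0 i Hi); specialize (hpos i Hi); simpl in *; lra).
  assert (Hrz : forall i, (i < n)%nat ->
      sqrt (re * re + im * im) * z i <= mvmul n (jacobian n P B xstar) z i)
    by (apply modulus_eigenvector_le; auto using jacobian_nonneg).
  assert (Hfix := limit_quad_map_fixed n a P B x xstar hrec hlim).
  destruct (supersolution_near_fixed_point n a P B hP hb (x O) xstar z _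
      hx0 hpos Hfix Hz Hgt Hrz) as [t [Ht [Hbase Hsuper]]].
  assert (Hbelow : forall k, vle n (x k) (fun j => xstar j - t * z j))
    by (apply (iterates_le_supersolution n a P B ha hP hb); auto).
  assert (Hlim0 : xstar i0 <= xstar i0 - t * z i0).
  { apply (Rle_cv_lim (Un := fun k => x k i0) (Vn := fun _ => xstar i0 - t * z i0)); auto.
    - intros k. apply Hbelow; auto.
    - apply Un_cv_const. }
  assert (0 < z i0) by (apply modulus_nonzero; auto).
  nra.
Qed.
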